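(* Let $\Lambda>1$ and let $(v_1,v_2)$ be a solution with positive components of \[ -v_1''+v_1^3-v_1+\Lambda v_2^2v_1=0,\qquad -v_2''+v_2^3-v_2+\Lambda v_1^2v_2=0,\qquad z\in\mathbb{R}, \] \[ (v_1,v_2)\to(0,1)\ \text{as } z\to-\infty,\qquad (v_1,v_2)\to(1,0)\ \text{as } z\to+\infty. \] Then $v_1'>0$ on $\mathbb{R}$ implies $v_2'<0$ on $\mathbb{R}$, and conversely $v_2'<0$ on $\mathbb{R}$ implies $v_1'>0$ on $\mathbb{R}$. *)

From Stdlib Require Import Reals.
From Coquelicot Require Import Coquelicot.
Open Scope R_scope.

Definition is_solution (Lam : R) (v1 v2 : R -> R) : Prop :=
  (forall z, ex_derive v1 z) /\ (forall z, ex_derive v2 z) /\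
  (forall z, ex_derive (Derive v1) z) /\ (forall z, ex_derive (Derive v2) z) /\
  (forall z, - Derive (Derive v1) z + v1 z ^ 3 - v1 z + Lam * v2 z ^ 2 * v1 z = 0) /\
  (forall z, - Derive (Derive v2) z + v2 z ^ 3 - v2 z + Lam * v1 z ^ 2 * v2 z = 0).

From Stdlib Require Import Reals Lra.
From Coquelicot Require Import Coquelicot.
Open Scope R_scope.

(* The second equation reads v2'' = v2 q with q = v2^2 - 1 + Lam v1^2.  Assume
   v1' > 0.  If v2 increased somewhere, the limit 0 at +oo would give an
   interior maximum of v2, where q <= 0, so v2 < 1 there; the limit 1 at -oo
   then gives an interior minimum further left, where q >= 0.  But q is
   strictly larger at the maximum, as both v1 and v2 are larger there.  So
   v2' <= 0, and a zero of v2' would be a maximum of v2' at which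
   v2''' = 2 Lam v1 v1' v2 > 0.  The converse follows
   by the symmetry (v1, v2)(z) |-> (v2, v1)(-z) of the system, which swaps
   the boundary conditions. *)

Lemma locally_pos_of_continuous (h : R -> R) (p : R) :
  continuous h p -> 0 < h p -> locally p (fun t => 0 < h t).
Proof. intros Hh Hp. exact (Hh _ (open_gt 0 (h p) Hp)). Qed.

Lemma locally_of_open_interval (P : R -> Prop) (a p b : R) :
  a < p < b -> (forall x, a < x < b -> P x) -> locally p P.
Proof.
  intros Hp HP. apply (filter_imp (fun x => a < x /\ x < b)); [exact HP|].
  exact (open_and _ _ (open_gt a) (open_lt b) p Hp).
Qed.

Lemma is_lim_p_infty_ex_lt (f : R -> R) (l c b : R) :
  is_lim f p_infty l -> l < c -> exists x, b < x /\ f x < c.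
Proof.
  intros Hf Hc. destruct (Hf _ (open_lt c l Hc)) as [M HM].
  exists (Rmax M b + 1).
  split; [generalize (Rmax_r M b); lra|].
  apply HM. generalize (Rmax_l M b); lra.
Qed.

Lemma is_lim_m_infty_ex_gt (f : R -> R) (l c a : R) :
  is_lim f m_infty l -> c < l -> exists x, x < a /\ c < f x.
Proof.
  intros Hf Hc. destruct (Hf _ (open_gt c l Hc)) as [M HM].
  exists (Rmin M a - 1).
  split; [generalize (Rmin_r M a); lra|].
  apply HM. generalize (Rmin_l M a); lra.
Qed.

Lemma strict_incr_of_Derive_pos (f : R -> R) (a b x y : R) :
  (forall t, ex_derive f t) -> (forall t, a < t < b -> 0 < Derive f t) ->
  a <= x -> x < y -> y <= b -> f x < f y.
Proof.
  intros Hf Hpos Hax Hxy Hyb.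
  destruct (MVT_cor2 f (Derive f) x y Hxy) as [c [Hc Hcxy]].
  { intros c _. apply is_derive_Reals, Derive_correct, Hf. }
  assert (0 < Derive f c) by (apply Hpos; lra).
  nra.
Qed.

Lemma strict_decr_of_Derive_neg (f : R -> R) (a b x y : R) :
  (forall t, ex_derive f t) -> (forall t, a < t < b -> Derive f t < 0) ->
  a <= x -> x < y -> y <= b -> f y < f x.
Proof.
  intros Hf Hneg Hax Hxy Hyb.
  enough (- f x < - f y) by lra.
  apply (strict_incr_of_Derive_pos (fun t => - f t) a b); auto.
  - intro t. exact (ex_derive_opp f t (Hf t)).
  - intros t Ht. rewrite Derive_opp. specialize (Hneg t Ht). lra.
Qed.

Lemma not_local_max_of_Derive2_pos (f : R -> R) (p : R) :
  (forall x, ex_derive f x) -> (forall x, ex_derive (Derive f) x) ->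
  locally p (fun t => 0 < Derive (Derive f) t) ->
  ~ locally p (fun x => f x <= f p).
Proof.
  intros Hf Hdf Hconvex Hmax.
  destruct (filter_and _ _ Hconvex Hmax) as [d Hd].
  assert (Hball : forall t, p - d < t < p + d -> 0 < Derive (Derive f) t /\ f t <= f p).
  { intros t Ht. apply Hd. change (Rabs (t - p) < d). apply Rabs_def1; lra. }
  assert (Hd0 := cond_pos d).
  destruct (Rle_lt_dec 0 (Derive f p)) as [Hdp|Hdp].
  - assert (Hincr : forall t, p < t < p + d -> 0 < Derive f t).
    { intros t Ht.
      enough (Derive f p < Derive f t) by lra.
      apply (strict_incr_of_Derive_pos _ (p - d) (p + d)); try lra; auto.
      intros s Hs. apply Hball; lra. }
    assert (f p < f (p + d / 2)) by (apply (strict_incr_of_Derive_pos _ p (p + d)); auto; lra).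
    assert (f (p + d / 2) <= f p) by (apply Hball; lra).
    lra.
  - assert (Hdecr : forall t, p - d < t < p -> Derive f t < 0).
    { intros t Ht.
      enough (Derive f t < Derive f p) by lra.
      apply (strict_incr_of_Derive_pos _ (p - d) (p + d)); try lra; auto.
      intros s Hs. apply Hball; lra. }
    assert (f p < f (p - d / 2)) by (apply (strict_decr_of_Derive_neg _ (p - d) p); auto; lra).
    assert (f (p - d / 2) <= f p) by (apply Hball; lra).
    lra.
Qed.

Lemma not_local_min_of_Derive2_neg (f : R -> R) (p : R) :
  (forall x, ex_derive f x) -> (forall x, ex_derive (Derive f) x) ->
  locally p (fun t => Derive (Derive f) t < 0) ->
  ~ locally p (fun x => f p <= f x).
Proof.
  intros Hf Hdf Hconcave Hmin.
  assert (HDopp : forall t, Derive (fun x => - f x) t = - Derive f t) by (intro; apply Derive_opp).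
  apply (not_local_max_of_Derive2_pos (fun x => - f x) p).
  - intro x. exact (ex_derive_opp f x (Hf x)).
  - intro x. apply (ex_derive_ext (fun t => - Derive f t)); [intro; now rewrite HDopp|].
    exact (ex_derive_opp _ x (Hdf x)).
  - revert Hconcave; apply filter_imp; intros t Ht.
    rewrite (Derive_ext _ (fun x => - Derive f x) _ HDopp), Derive_opp. lra.
  - revert Hmin; apply filter_imp; intros x Hx. lra.
Qed.

Lemma Derive_nonpos_of_nonincreasing (f : R -> R) :
  (forall x, ex_derive f x) -> (forall a b, a <= b -> f b <= f a) ->
  forall x, Derive f x <= 0.
Proof.
  intros Hf Hdecr x.
  set (pr := fun t => ex_derive_Reals_0 f t (Hf t)).
  rewrite <- (Derive_Reals f x (pr x)).
  exact (nonpos_derivative_0 f pr Hdecr x).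
Qed.

Lemma ex_interior_max (f : R -> R) (a c b : R) :
  (forall x, continuity_pt f x) -> a < c < b -> f a < f c -> f b < f c ->
  exists p, a < p < b /\ f c <= f p /\ locally p (fun x => f x <= f p).
Proof.
  intros Hf Hc Ha Hb.
  destruct (continuity_ab_maj f a b) as [p [Hmax Hp]]; [lra|intros; apply Hf|].
  assert (f c <= f p) by (apply Hmax; lra).
  assert (p <> a) by (intro; subst p; lra).
  assert (p <> b) by (intro; subst p; lra).
  assert (Hpint : a < p < b) by lra.
  exists p. split; [exact Hpint|split; [assumption|]].
  apply (locally_of_open_interval _ a p b Hpint). intros x Hx. apply Hmax; lra.
Qed.

Lemma ex_interior_min (f : R -> R) (a c b : R) :
  (forall x, continuity_pt f x) -> a < c < b -> f c < f a -> f c < f b ->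
  exists p, a < p < b /\ f p <= f c /\ locally p (fun x => f p <= f x).
Proof.
  intros Hf Hc Ha Hb.
  destruct (ex_interior_max (fun x => - f x) a c b) as [p [Hp [Hcp Hmax]]]; try lra.
  { intro x. apply continuity_pt_opp, Hf. }
  exists p. split; [exact Hp|split; [lra|]].
  revert Hmax; apply filter_imp; intros x Hx. lra.
Qed.

Lemma is_derive_reflect (f : R -> R) (z l : R) :
  is_derive f (- z) l -> is_derive (fun t => f (- t)) z (- l).
Proof.
  intro Hf. replace (- l) with (scal (-1) l) by (unfold scal; simpl; unfold mult; simpl; ring).
  apply (is_derive_comp f Ropp); [exact Hf|].
  auto_derive; [exact I|ring].
Qed.

Lemma Derive_reflect (f : R -> R) (z : R) :
  ex_derive f (- z) -> Derive (fun t => f (- t)) z = - Derive f (- z).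
Proof. intro Hf. apply is_derive_unique, is_derive_reflect, Derive_correct, Hf. Qed.

Lemma ex_derive_reflect (f : R -> R) (z : R) :
  ex_derive f (- z) -> ex_derive (fun t => f (- t)) z.
Proof. intro Hf. eexists. apply is_derive_reflect, Derive_correct, Hf. Qed.

Section Reflect.

Variable f : R -> R.
Hypothesis ex_f : forall x, ex_derive f x.
Hypothesis ex_Df : forall x, ex_derive (Derive f) x.

Let Derive_fr (t : R) : Derive (fun s => f (- s)) t = - Derive f (- t).
Proof. apply Derive_reflect, ex_f. Qed.

Lemma ex_derive_Derive_reflect (z : R) : ex_derive (Derive (fun t => f (- t))) z.
Proof.
  apply (ex_derive_ext (fun t => - Derive f (- t))); [intro t; now rewrite Derive_fr|].
  exact (ex_derive_opp _ z (ex_derive_reflect _ z (ex_Df (- z)))).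
Qed.

Lemma Derive2_reflect (z : R) :
  Derive (Derive (fun t => f (- t))) z = Derive (Derive f) (- z).
Proof.
  rewrite (Derive_ext _ (fun t => - Derive f (- t)) z Derive_fr), Derive_opp.
  rewrite Derive_reflect by apply ex_Df. ring.
Qed.

End Reflect.

Lemma is_lim_reflect (f : R -> R) (x l : Rbar) :
  is_lim f (Rbar_opp x) l -> is_lim (fun t => f (- t)) x l.
Proof.
  intro Hf. apply (is_lim_comp f Ropp x l (Rbar_opp x)); [exact Hf| |].
  - apply (is_lim_opp (fun t => t)), is_lim_id.
  - destruct x as [r| |]; simpl.
    + exists (mkposreal 1 Rlt_0_1). intros y _ Hy E. apply Hy. injection E. lra.
    + exists 0. discriminate.
    + exists 0. discriminate.
Qed.

Section Decreasing_component.

Variables (Lam : R) (v1 v2 : R -> R).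
Hypothesis Lam_pos : 0 < Lam.
Hypothesis ex_v1 : forall z, ex_derive v1 z.
Hypothesis ex_v2 : forall z, ex_derive v2 z.
Hypothesis ex_Dv1 : forall z, ex_derive (Derive v1) z.
Hypothesis ex_Dv2 : forall z, ex_derive (Derive v2) z.
Hypothesis v2_eq : forall z,
  Derive (Derive v2) z = v2 z * (v2 z ^ 2 - 1 + Lam * v1 z ^ 2).
Hypothesis v1_pos : forall z, 0 < v1 z.
Hypothesis v2_pos : forall z, 0 < v2 z.
Hypothesis v2_lim_m_infty : is_lim v2 m_infty 1.
Hypothesis v2_lim_p_infty : is_lim v2 p_infty 0.
Hypothesis Derive_v1_pos : forall z, 0 < Derive v1 z.

Let q (z : R) : R := v2 z ^ 2 - 1 + Lam * v1 z ^ 2.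

Let continuous_q (z : R) : continuous q z.
Proof. apply (@ex_derive_continuous R_AbsRing R_NormedModule). unfold q. auto_derive. auto. Qed.

Lemma q_nonpos_at_local_max (p : R) : locally p (fun x => v2 x <= v2 p) -> q p <= 0.
Proof.
  intro Hmax. apply Rnot_lt_le. intro Hq.
  apply (not_local_max_of_Derive2_pos v2 p ex_v2 ex_Dv2); [|exact Hmax].
  generalize (locally_pos_of_continuous q p (continuous_q p) Hq).
  apply filter_imp. intros t Ht. rewrite v2_eq. apply Rmult_lt_0_compat; [apply v2_pos|exact Ht].
Qed.

Lemma q_nonneg_at_local_min (p : R) : locally p (fun x => v2 p <= v2 x) -> 0 <= q p.
Proof.
  intro Hmin. apply Rnot_lt_le. intro Hq.
  apply (not_local_min_of_Derive2_neg v2 p ex_v2 ex_Dv2); [|exact Hmin].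
  assert (Hnq : 0 < - q p) by lra.
  generalize (locally_pos_of_continuous (fun t => - q t) p
                (continuous_opp q p (continuous_q p)) Hnq).
  apply filter_imp. intros t Ht. rewrite v2_eq.
  unfold q in Ht. generalize (v2_pos t). nra.
Qed.

Let continuity_pt_v2 (z : R) : continuity_pt v2 z.
Proof. apply continuity_pt_filterlim, (@ex_derive_continuous R_AbsRing R_NormedModule), ex_v2. Qed.

Lemma v2_nonincreasing (a b : R) : a <= b -> v2 b <= v2 a.
Proof.
  intro Hab. apply Rnot_lt_le. intro Hv.
  assert (Hab' : a < b) by (destruct Hab as [|E]; [assumption|subst; lra]).
  destruct (is_lim_p_infty_ex_lt v2 0 (v2 b) b v2_lim_p_infty (v2_pos b)) as [M [HbM HM]].
  destruct (ex_interior_max v2 a b M continuity_pt_v2) as [zb [Hzb [Hbzb Hmax]]]; try lra.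
  assert (Hqzb := q_nonpos_at_local_max zb Hmax).
  assert (Hzb1 : v2 zb < 1).
  { assert (0 < Lam * v1 zb ^ 2) by (apply Rmult_lt_0_compat; [lra|apply pow_lt, v1_pos]).
    unfold q in Hqzb. generalize (v2_pos zb). nra. }
  destruct (is_lim_m_infty_ex_gt v2 1 (v2 zb) a v2_lim_m_infty Hzb1) as [N [HNa HN]].
  destruct (ex_interior_min v2 N a zb continuity_pt_v2) as [za [Hza [Hzaa Hmin]]]; try lra.
  assert (Hqza := q_nonneg_at_local_min za Hmin).
  assert (Hv1 : v1 za < v1 zb).
  { apply (strict_incr_of_Derive_pos v1 za zb); auto; lra. }
  assert (Hv2 : v2 za < v2 zb) by lra.
  assert (v2 za ^ 2 < v2 zb ^ 2) by (generalize (v2_pos za); nra).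
  assert (v1 za ^ 2 < v1 zb ^ 2) by (generalize (v1_pos za); nra).
  unfold q in Hqza, Hqzb. nra.
Qed.

Let d3 (t : R) : R :=
  Derive v2 t * q t + v2 t * (2 * v2 t * Derive v2 t + 2 * Lam * v1 t * Derive v1 t).

Let is_derive_Derive2_v2 (t : R) : is_derive (Derive (Derive v2)) t (d3 t).
Proof.
  apply (is_derive_ext (fun s => v2 s * q s)); [intro s; now rewrite v2_eq|].
  unfold d3, q. auto_derive; [auto|].
  change (fun x => v1 x) with v1; change (fun x => v2 x) with v2. ring.
Qed.

Lemma Derive_v2_neg (z : R) : Derive v2 z < 0.
Proof.
  assert (Hnonpos := Derive_nonpos_of_nonincreasing v2 ex_v2 v2_nonincreasing).
  destruct (Rle_lt_or_eq_dec _ _ (Hnonpos z)) as [|Hz]; [assumption|exfalso].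
  apply (not_local_max_of_Derive2_pos (Derive v2) z ex_Dv2).
  - intro t. eexists. apply is_derive_Derive2_v2.
  - assert (Hd3 : continuous d3 z).
    { apply (@ex_derive_continuous R_AbsRing R_NormedModule).
      unfold d3, q. auto_derive. repeat split; auto. }
    assert (Hd3z : 0 < d3 z).
    { enough (0 < 2 * Lam * v2 z * (v1 z * Derive v1 z)) by (unfold d3; rewrite Hz; lra).
      repeat apply Rmult_lt_0_compat; auto; lra. }
    generalize (locally_pos_of_continuous d3 z Hd3 Hd3z). apply filter_imp.
    intros t Ht. now rewrite (is_derive_unique _ _ _ (is_derive_Derive2_v2 t)).
  - apply filter_forall. intro x. rewrite Hz. apply Hnonpos.
Qed.

End Decreasing_component.

Lemma solution_Derive_v2_neg (Lam : R) (v1 v2 : R -> R) :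
  0 < Lam -> is_solution Lam v1 v2 ->
  (forall z, 0 < v1 z) -> (forall z, 0 < v2 z) ->
  is_lim v2 m_infty 1 -> is_lim v2 p_infty 0 ->
  (forall z, 0 < Derive v1 z) -> forall z, Derive v2 z < 0.
Proof.
  intros Lam_pos [ex1 [ex2 [exD1 [exD2 [_ eq2]]]]] pos1 pos2 lim2m lim2p Hv1.
  apply (Derive_v2_neg Lam v1 v2); auto.
  intro z. specialize (eq2 z). lra.
Qed.

Lemma is_solution_reflect_swap (Lam : R) (v1 v2 : R -> R) :
  is_solution Lam v1 v2 -> is_solution Lam (fun z => v2 (- z)) (fun z => v1 (- z)).
Proof.
  intros [ex1 [ex2 [exD1 [exD2 [eq1 eq2]]]]].
  repeat split.
  - intro z. apply ex_derive_reflect, ex2.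
  - intro z. apply ex_derive_reflect, ex1.
  - apply ex_derive_Derive_reflect; assumption.
  - apply ex_derive_Derive_reflect; assumption.
  - intro z. rewrite Derive2_reflect by assumption. apply eq2.
  - intro z. rewrite Derive2_reflect by assumption. apply eq1.
Qed.

Theorem lemma7p1 (Lam : R) (v1 v2 : R -> R) :
  1 < Lam ->
  is_solution Lam v1 v2 ->
  (forall z, 0 < v1 z) -> (forall z, 0 < v2 z) ->
  is_lim v1 m_infty 0 -> is_lim v2 m_infty 1 ->
  is_lim v1 p_infty 1 -> is_lim v2 p_infty 0 ->
  ((forall z, 0 < Derive v1 z) -> (forall z, Derive v2 z < 0)) /\
  ((forall z, Derive v2 z < 0) -> (forall z, 0 < Derive v1 z)).
Proof.
  intros HLam Hsol pos1 pos2 lim1m lim2m lim1p lim2p.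
  assert (Lam_pos : 0 < Lam) by lra.
  assert (ex1 : forall z, ex_derive v1 z) by apply Hsol.
  assert (ex2 : forall z, ex_derive v2 z) by apply Hsol.
  split.
  - exact (solution_Derive_v2_neg Lam v1 v2 Lam_pos Hsol pos1 pos2 lim2m lim2p).
  - intros Hv2 z.
    assert (Hrefl : Derive (fun t => v1 (- t)) (- z) < 0).
    { apply (solution_Derive_v2_neg Lam (fun t => v2 (- t)));
        auto using is_solution_reflect_swap, is_lim_reflect.
      intro t. rewrite Derive_reflect by apply ex2. specialize (Hv2 (- t)). lra. }
    rewrite Derive_reflect, Ropp_involutive in Hrefl by apply ex1. lra.
Qed.
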